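(* Let $(V_A,D_A,\oplus,\ominus)$ and $(V_B,D_B,\oplus,\ominus)$ be change structures and $f:V_A\to V_B$. Let $(C,i,d)$ be a consistent incrementalization of $f$, i.e. $C$ is a type, $i:V_A\to V_B\times C$, $d:D_A\to C\to D_B\times C$, and for all $x\in V_A$, $x'\in D_A$: (1) $i_1\,x=f\,x$; (2) $f(x\oplus x')=f\,x\oplus d_1\,x'\,(i_2\,x)$; (3) $i_2(x\oplus x')=d_2\,x'\,(i_2\,x)$, where subscripts $1,2$ denote first and second components of the pair returned. Then $(C,i,d)$ is value preserving with respect to $f$: for all $x\in V_A$ and all finite lists $xs'$ of elements of $D_A$, $(\mathsf{iter}\,(C,i,d)\,x\,xs')_1=f(\mathsf{sum}\,x\,xs')$.
   Context: A change structure consists of a value type $V$, change type $D$, update $\oplus:V\to D\to V$ and difference $\ominus:V\to V\to D$ with $x\oplus(y\ominus x)=y$. The functions are defined recursively on lists: $\mathsf{iter}\,(C,i,d)\,x\,[\,]=i\,x$ and $\mathsf{iter}\,(C,i,d)\,x\,(x'::xs')=(y\oplus y',c_2)$ where $(y,c_1)=\mathsf{iter}\,(C,i,d)\,x\,xs'$ and $(y',c_2)=d\,x'\,c_1$; $\mathsf{sum}\,x\,[\,]=x$ and $\mathsf{sum}\,x\,(x'::xs')=(\mathsf{sum}\,x\,xs')\oplus x'$. *)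

From Stdlib Require Import List.
Import ListNotations.

Record ChangeStruct := {
  cs_V : Type;
  cs_D : Type;
  cs_oplus : cs_V -> cs_D -> cs_V;
  cs_ominus : cs_V -> cs_V -> cs_D;
  cs_law : forall x y : cs_V, cs_oplus x (cs_ominus y x) = y
}.

Fixpoint iter (A B : ChangeStruct) (C : Type)
  (i : cs_V A -> cs_V B * C) (d : cs_D A -> C -> cs_D B * C)
  (x : cs_V A) (xs : list (cs_D A)) : cs_V B * C :=
  match xs with
  | [] => i x
  | x' :: xs' =>
      let (y, c1) := iter A B C i d x xs' in
      let (y', c2) := d x' c1 in
      (cs_oplus B y y', c2)
  end.

Fixpoint sum (A : ChangeStruct) (x : cs_V A) (xs : list (cs_D A)) : cs_V A :=
  match xs with
  | [] => x
  | x' :: xs' => cs_oplus A (sum A x xs') x'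
  end.

Definition consistent_incr (A B : ChangeStruct) (f : cs_V A -> cs_V B)
  (C : Type) (i : cs_V A -> cs_V B * C) (d : cs_D A -> C -> cs_D B * C) : Prop :=
  forall (x : cs_V A) (x' : cs_D A),
    fst (i x) = f x /\
    f (cs_oplus A x x') = cs_oplus B (f x) (fst (d x' (snd (i x)))) /\
    snd (i (cs_oplus A x x')) = snd (d x' (snd (i x))).

Definition value_preserving (A B : ChangeStruct) (f : cs_V A -> cs_V B)
  (C : Type) (i : cs_V A -> cs_V B * C) (d : cs_D A -> C -> cs_D B * C) : Prop :=
  forall (x : cs_V A) (xs : list (cs_D A)),
    fst (iter A B C i d x xs) = f (sum A x xs).

(* The incremental state never drifts from a from-scratch run: by induction on
   the list of changes, [iter x xs] equals [i (sum x xs)], since consistency says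
   precisely that one step of [d] maps [i y] to [i (y (+) y')]; the first
   component of [i] is [f]. *)
From Stdlib Require Import List.

Section ConsistentIncrementalization.

Variables (A B : ChangeStruct) (f : cs_V A -> cs_V B) (C : Type).
Variables (i : cs_V A -> cs_V B * C) (d : cs_D A -> C -> cs_D B * C).
Hypothesis consistent : consistent_incr A B f C i d.

(* [consistent_incr] states (1) under a quantifier over changes; [x (-) x]
   supplies the change needed to extract it. *)
Lemma consistent_incr_init (x : cs_V A) : fst (i x) = f x.
Proof. exact (proj1 (consistent x (cs_ominus A x x))). Qed.

Lemma consistent_incr_step (x : cs_V A) (x' : cs_D A) :
  i (cs_oplus A x x') =
  (cs_oplus B (fst (i x)) (fst (d x' (snd (i x)))), snd (d x' (snd (i x)))).
Proof.
  destruct (consistent x x') as [_ [Hf Hc]].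
  apply injective_projections; simpl.
  - rewrite !consistent_incr_init; exact Hf.
  - exact Hc.
Qed.

Lemma iter_eq_init_sum (x : cs_V A) (xs : list (cs_D A)) :
  iter A B C i d x xs = i (sum A x xs).
Proof.
  induction xs as [|x' xs IH]; simpl; [reflexivity|].
  rewrite IH, consistent_incr_step.
  destruct (i (sum A x xs)) as [y c]; simpl.
  destruct (d x' c) as [y' c']; reflexivity.
Qed.

End ConsistentIncrementalization.

Theorem lemma5p4 (A B : ChangeStruct) (f : cs_V A -> cs_V B) (C : Type)
  (i : cs_V A -> cs_V B * C) (d : cs_D A -> C -> cs_D B * C) :
  consistent_incr A B f C i d -> value_preserving A B f C i d.
Proof.
  intros consistent x xs.
  rewrite (iter_eq_init_sum A B f C i d consistent).
  exact (consistent_incr_init A B f C i d consistent (sum A x xs)).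
Qed.
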